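(* Let $\mathfrak{g}_1,\mathfrak{g}_2$ be $S$-algebras and let $D$ be a derivation of $\mathfrak{g}_1\underline{\times}\mathfrak{g}_2$, with $D_{ij}=p_iDp_j$. If $D_{11}$ and $D_{22}$ are nilpotent derivations (of $\mathfrak{g}_1$, resp. $\mathfrak{g}_2$), then $D_{33}$ is a nilpotent endomorphism (of $\mathfrak{g}_3$).
   Context: All Lie algebras are finite-dimensional, complex, nilpotent and nonabelian. $C^1\mathfrak{g}=[\mathfrak{g},\mathfrak{g}]$. Product by generators: for $\mathfrak{g}_1,\mathfrak{g}_2$ of dimensions $m_1,m_2$ take bases $\{X_1,\dots,X_{m_1}\}$, $\{X'_1,\dots,X'_{m_2}\}$ such that $X_1,\dots,X_{n_1}$ generate $\mathfrak{g}_1$ and $X_{n_1+1},\dots,X_{m_1}$ span $C^1\mathfrak{g}_1$, and similarly for $\mathfrak{g}_2$ with $n_2$ generators. $\mathfrak{g}_1\underline{\times}\mathfrak{g}_2$ is the Lie algebra on $\mathfrak{g}_1\oplus\mathfrak{g}_2\oplus\mathfrak{g}_3$, $\mathfrak{g}_3=\langle Z_1,\dots,Z_{n_1n_2}\rangle$, with the brackets of $\mathfrak{g}_1$ and of $\mathfrak{g}_2$, $[X_i,X'_j]=Z_{(i-1)n_2+j}$ for $i\le n_1$, $j\le n_2$, $[X_i,X'_j]=0$ otherwise, and $\mathfrak{g}_3$ central. $p_i$ is the projection onto $\mathfrak{g}_i$. A nilpotent Lie algebra $\mathfrak{g}_1$ is an $S$-algebra if for every Lie algebra $\mathfrak{g}_2$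 and every derivation $D$ of $\mathfrak{g}_1\underline{\times}\mathfrak{g}_2$ one has $D_{21}(\mathfrak{g}_1)\subset C^1\mathfrak{g}_2$ (and symmetrically with the roles of the factors exchanged). *)

From HB Require Import structures.
From mathcomp Require Import all_boot all_order all_algebra.
From mathcomp Require Import Rstruct complex.
Set Implicit Arguments. Unset Strict Implicit. Unset Printing Implicit Defensive.
Import Order.TTheory GRing.Theory Num.Theory.
Local Open Scope ring_scope.

Definition C : Type := (Rdefinitions.R)[i].
HB.instance Definition _ := GRing.Field.on C.

(* A Lie bracket on the coordinate space C^m = 'rV[C]_m (fixed basis = unit
   vectors delta_mx 0 i). *)
Definition is_lie_bracket (m : nat) (b : 'rV[C]_m -> 'rV[C]_m -> 'rV[C]_m) :=
  [/\ (forall (a : C) x y z, b (a *: x + y) z = a *: b x z + b y z),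
      (forall (a : C) x y z, b x (a *: y + z) = a *: b x y + b x z),
      (forall x, b x x = 0) &
      (forall x y z, b x (b y z) + b y (b z x) + b z (b x y) = 0)].

(* nilpotent: some k with ad_{x_1} ... ad_{x_k} y = 0 for all x_i, y,
   i.e. C^k g = 0 *)
Definition lie_nilpotent (m : nat) (b : 'rV[C]_m -> 'rV[C]_m -> 'rV[C]_m) :=
  exists k : nat, forall (xs : seq 'rV[C]_m) (y : 'rV[C]_m),
    size xs = k -> foldr b y xs = 0.

Definition lie_nonabelian (m : nat) (b : 'rV[C]_m -> 'rV[C]_m -> 'rV[C]_m) :=
  exists x y, b x y != 0.

(* C^1 g = [g,g], as a row space: span of the brackets of basis vectors
   (equal to the span of all brackets by bilinearity) *)
Definition derived_mx (m : nat) (b : 'rV[C]_m -> 'rV[C]_m -> 'rV[C]_m) : 'M[C]_m :=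
  (\sum_(i < m) \sum_(j < m) <<b (delta_mx 0 i) (delta_mx 0 j)>>)%MS.

Definition generated_by_first (n k : nat)
    (b : 'rV[C]_(n + k) -> 'rV[C]_(n + k) -> 'rV[C]_(n + k)) :=
  forall S : 'M[C]_(n + k),
    (forall i : 'I_(n + k), (i < n)%N -> ((delta_mx 0 i : 'rV[C]_(n + k)) <= S)%MS) ->
    (forall u v, (u <= S)%MS -> (v <= S)%MS -> (b u v <= S)%MS) ->
    ((1%:M : 'M[C]_(n + k)) <= S)%MS.

(* X_{n+1},...,X_{n+k} span C^1 g *)
Definition last_span_derived (n k : nat)
    (b : 'rV[C]_(n + k) -> 'rV[C]_(n + k) -> 'rV[C]_(n + k)) :=
  (derived_mx b == row_mx (0 : 'M[C]_(k, n)) (1%:M : 'M[C]_k))%MS.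

(* A finite-dimensional complex nilpotent nonabelian Lie algebra of dimension
   ngen + nder, given in a basis whose first ngen vectors generate it and whose
   last nder vectors span (hence form a basis of) C^1. *)
Record nlie := NLie {
  ngen : nat;
  nder : nat;
  lbr : 'rV[C]_(ngen + nder) -> 'rV[C]_(ngen + nder) -> 'rV[C]_(ngen + nder);
  lbr_lie : is_lie_bracket lbr;
  lbr_nil : lie_nilpotent lbr;
  lbr_nonab : lie_nonabelian lbr;
  lbr_gen : generated_by_first lbr;
  lbr_der : last_span_derived lbr
}.

Definition ldim (g : nlie) := (ngen g + nder g)%N.

(* the space of g1 x_ g2 = g1 (+) g2 (+) g3, dim g3 = n1 n2 *)
Definition pdim (g1 g2 : nlie) := (ldim g1 + ldim g2 + ngen g1 * ngen g2)%N.

Section Product.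
Variables g1 g2 : nlie.

Definition p1 (w : 'rV[C]_(pdim g1 g2)) : 'rV[C]_(ldim g1) := lsubmx (lsubmx w).
Definition p2 (w : 'rV[C]_(pdim g1 g2)) : 'rV[C]_(ldim g2) := rsubmx (lsubmx w).
Definition p3 (w : 'rV[C]_(pdim g1 g2)) : 'rV[C]_(ngen g1 * ngen g2) := rsubmx w.

Definition i1 (v : 'rV[C]_(ldim g1)) : 'rV[C]_(pdim g1 g2) := row_mx (row_mx v 0) 0.
Definition i2 (v : 'rV[C]_(ldim g2)) : 'rV[C]_(pdim g1 g2) := row_mx (row_mx 0 v) 0.
Definition i3 (v : 'rV[C]_(ngen g1 * ngen g2)) : 'rV[C]_(pdim g1 g2) := row_mx 0 v.

(* [X_i, X'_j] = Z_{(i-1) n2 + j} (i <= n1, j <= n2); g3 central;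
   the g3-component of [x,y] is the mxvec (row-major) of the n1 x n2 matrix
   x1_i y2_j - y1_i x2_j built from generator coordinates. *)
Definition prod_br (x y : 'rV[C]_(pdim g1 g2)) : 'rV[C]_(pdim g1 g2) :=
  row_mx (row_mx (lbr (p1 x) (p1 y)) (lbr (p2 x) (p2 y)))
    (mxvec (\matrix_(i < ngen g1, j < ngen g2)
       (lsubmx (p1 x) 0 i * lsubmx (p2 y) 0 j - lsubmx (p1 y) 0 i * lsubmx (p2 x) 0 j))).

(* derivations of g1 x_ g2, as matrices acting on row vectors on the right *)
Definition is_prod_derivation (D : 'M[C]_(pdim g1 g2)) :=
  forall x y, prod_br x y *m D = prod_br (x *m D) y + prod_br x (y *m D).

Definition D11 (D : 'M[C]_(pdim g1 g2)) v := p1 (i1 v *m D).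
Definition D22 (D : 'M[C]_(pdim g1 g2)) v := p2 (i2 v *m D).
Definition D33 (D : 'M[C]_(pdim g1 g2)) v := p3 (i3 v *m D).
Definition D21 (D : 'M[C]_(pdim g1 g2)) v := p2 (i1 v *m D).
Definition D12 (D : 'M[C]_(pdim g1 g2)) v := p1 (i2 v *m D).
End Product.

Definition nilpotent_endo (T : zmodType) (f : T -> T) :=
  exists k : nat, forall v, iter k f v = 0.

Definition S_algebra (g1 : nlie) :=
  (forall (g2 : nlie) (D : 'M[C]_(pdim g1 g2)), is_prod_derivation D ->
     forall v, (D21 D v <= derived_mx (@lbr g2))%MS) /\
  (forall (g2 : nlie) (D : 'M[C]_(pdim g2 g1)), is_prod_derivation D ->
     forall v, (D12 D v <= derived_mx (@lbr g2))%MS).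

(* D_11 is a derivation of g_1, so it preserves C^1 g_1, the span of the last
   basis vectors; its matrix is therefore block triangular and its generator
   block A is nilpotent.  Likewise for the generator block B of D_22.  As g_3 is
   central and Z_ij = [X_i, X'_j], the g_3-component of D Z_ij is that of
   [D X_i, X'_j] + [X_i, D X'_j], which only sees A and B: D_33 is the Kronecker
   sum A^T (x) 1 + 1 (x) B of two commuting nilpotent maps. *)

From mathcomp Require Import all_boot all_algebra.

Set Implicit Arguments. Unset Strict Implicit. Unset Printing Implicit Defensive.
Import GRing.Theory.
Local Open Scope ring_scope.

Lemma exprDn_eq0_comm (R : pzRingType) (x y : R) m n :
  GRing.comm x y -> x ^+ m = 0 -> y ^+ n = 0 -> (x + y) ^+ (m + n) = 0.
Proof.
move=> cxy xm0 yn0; rewrite exprDn_comm //; apply: big1 => i _.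
have [ni | im] := leqP n i.
  by rewrite -(subnKC ni) exprD yn0 mul0r mulr0 mul0rn.
have mi : (m <= m + n - i)%N by rewrite -addnBA ?leq_addr ?(ltnW im).
by rewrite -(subnKC mi) exprD xm0 !mul0r mul0rn.
Qed.

Lemma trmxX (R : comPzRingType) n (A : 'M[R]_n) r : (A ^+ r)^T = A^T ^+ r.
Proof.
elim: r => [|r IHr]; first by rewrite !expr0 trmx1.
by rewrite exprSr exprS -IHr -!mulmxE trmx_mul.
Qed.

Lemma ulsubmxX (R : pzRingType) n k (M : 'M[R]_(n + k)) r :
  dlsubmx M = 0 -> ulsubmx (M ^+ r) = ulsubmx M ^+ r.
Proof.
move=> dlM0; suff: ulsubmx (M ^+ r) = ulsubmx M ^+ r /\ dlsubmx (M ^+ r) = 0 by case.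
elim: r => [|r [IHul IHdl]].
  by rewrite !expr0 -!idmxE scalar_mx_block block_mxKul block_mxKdl.
rewrite !exprSr -!mulmxE -[M ^+ r]submxK -[M in _ *m M]submxK mulmx_block.
by rewrite block_mxKul block_mxKdl IHul IHdl dlM0 !mulmx0 mul0mx !addr0.
Qed.

Lemma lsubmx_sub_row_mx0 (F : fieldType) p n k (A : 'M[F]_(p, n + k)) :
  (A <= row_mx (0 : 'M_(k, n)) 1%:M)%MS -> lsubmx A = 0.
Proof. by case/submxP=> X ->; rewrite mul_mx_row row_mxKl mulmx0. Qed.

Lemma lsubmx_row_mx0_mulmx (R : pzRingType) a b c (u : 'rV[R]_a)
    (M : 'M[R]_(a + b, a + c)) :
  lsubmx (row_mx u (0 : 'rV_b) *m M) = u *m ulsubmx M.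
Proof. by rewrite -{1}(vsubmxK M) mul_row_col mul0mx addr0 -mulmx_lsub. Qed.

Lemma outer_productE (R : pzRingType) a c (u u' : 'rV[R]_a) (w w' : 'rV[R]_c) :
  \matrix_(i < a, j < c) (u 0 i * w 0 j - u' 0 i * w' 0 j) = u^T *m w - u'^T *m w'.
Proof. by apply/matrixP => i j; rewrite !mxE !big_ord1 !mxE. Qed.

Section Endomorphisms.
Variables (F : fieldType) (n : nat).

Lemma iter_mulmx (f : 'rV[F]_n -> 'rV[F]_n) (M : 'M[F]_n) r v :
  (forall u, f u = u *m M) -> iter r f v = v *m M ^+ r.
Proof.
move=> fM; elim: r v => [|r IHr] v; first by rewrite expr0 mulmx1.
by rewrite iterS IHr fM exprSr -mulmxE mulmxA.
Qed.

Lemma nilpotent_endo_mxP (f : 'rV[F]_n -> 'rV[F]_n) (M : 'M[F]_n) :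
  (forall u, f u = u *m M) -> nilpotent_endo f <-> exists r, M ^+ r = 0.
Proof.
move=> fM; split=> [[r fr0] | [r Mr0]]; exists r; last first.
  by move=> v; rewrite (iter_mulmx _ _ fM) Mr0 mulmx0.
by apply/eqP/mulmxP => u; rewrite mulmx0 -(iter_mulmx _ _ fM).
Qed.

End Endomorphisms.

Section KroneckerSum.
Variables (F : fieldType) (m n : nat).

Lemma mxvec_mulmx_inj (L L' : 'M[F]_(m * n)) :
  (forall X : 'M_(m, n), mxvec X *m L = mxvec X *m L') -> L = L'.
Proof. by move=> eqL; apply/eqP/mulmxP => u; rewrite -(vec_mxK u) eqL. Qed.

Lemma lin_mulmxX (A : 'M[F]_m) r : lin_mulmx (A ^+ r) = lin_mulmx A ^+ r :> 'M_(m * n).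
Proof.
elim: r => [|r IHr]; apply: mxvec_mulmx_inj => X.
  by rewrite !expr0 mulmx1 mul_vec_lin /= mul1mx.
by rewrite exprS exprSr -mulmxE mulmxA -IHr !mul_vec_lin /= mulmxA mulmxE.
Qed.

Lemma lin_mulmxrX (B : 'M[F]_n) r : lin_mulmxr (B ^+ r) = lin_mulmxr B ^+ r :> 'M_(m * n).
Proof.
elim: r => [|r IHr]; apply: mxvec_mulmx_inj => X.
  by rewrite !expr0 mulmx1 mul_vec_lin /= mulmx1.
by rewrite !exprSr -!mulmxE mulmxA -IHr !mul_vec_lin /= mulmxA.
Qed.

Lemma lin_mulmx_mulmxr_comm (A : 'M[F]_m) (B : 'M[F]_n) :
  GRing.comm (lin_mulmx A : 'M_(m * n)) (lin_mulmxr B).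
Proof.
by apply: mxvec_mulmx_inj => X; rewrite -!mulmxE !mulmxA !mul_vec_lin /= mulmxA.
Qed.

Lemma kronecker_sum_nilpotent (A : 'M[F]_m) (B : 'M[F]_n) r s :
  A ^+ r = 0 -> B ^+ s = 0 -> (lin_mulmx A + lin_mulmxr B) ^+ (r + s) = 0 :> 'M_(m * n).
Proof.
move=> Ar0 Bs0; apply: exprDn_eq0_comm; first exact: lin_mulmx_mulmxr_comm.
  by rewrite -lin_mulmxX Ar0 linear0.
by rewrite -lin_mulmxrX Bs0 linear0.
Qed.

End KroneckerSum.

Definition lie_derivation (m : nat) (b : 'rV[C]_m -> 'rV[C]_m -> 'rV[C]_m)
    (M : 'M[C]_m) :=
  forall u w, b u w *m M = b (u *m M) w + b u (w *m M).

Section LieBracket.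
Variables (m : nat) (b : 'rV[C]_m -> 'rV[C]_m -> 'rV[C]_m).
Hypothesis lie_b : is_lie_bracket b.

Lemma lie_br0l w : b 0 w = 0.
Proof.
case: lie_b => linl _ _ _; have := linl (-1) 0 0 w.
by rewrite !scaleN1r oppr0 addr0 addNr.
Qed.

Lemma lie_br0r u : b u 0 = 0.
Proof.
case: lie_b => _ linr _ _; have := linr (-1) u 0 0.
by rewrite !scaleN1r oppr0 addr0 addNr.
Qed.

Lemma lie_brDl u u' w : b (u + u') w = b u w + b u' w.
Proof. by case: lie_b => linl _ _ _; rewrite -(scale1r u) linl !scale1r. Qed.

Lemma lie_brDr u w w' : b u (w + w') = b u w + b u w'.
Proof. by case: lie_b => _ linr _ _; rewrite -(scale1r w) linr !scale1r. Qed.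

Lemma lie_brZl a u w : b (a *: u) w = a *: b u w.
Proof. by case: lie_b => linl _ _ _; rewrite -(addr0 (a *: u)) linl lie_br0l addr0. Qed.

Lemma lie_brZr a u w : b u (a *: w) = a *: b u w.
Proof. by case: lie_b => _ linr _ _; rewrite -(addr0 (a *: w)) linr lie_br0r addr0. Qed.

Lemma lie_br_sub_derived u w : (b u w <= derived_mx b)%MS.
Proof.
rewrite (row_sum_delta u); elim/big_ind: _ => [|u1 u2 sub1 sub2|i _].
- by rewrite lie_br0l sub0mx.
- by rewrite lie_brDl addmx_sub.
rewrite lie_brZl scalemx_sub // (row_sum_delta w).
elim/big_ind: _ => [|w1 w2 sub1 sub2|j _].
- by rewrite lie_br0r sub0mx.
- by rewrite lie_brDr addmx_sub.
rewrite lie_brZr scalemx_sub //.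
by apply: (sumsmx_sup i) => //; apply: (sumsmx_sup j) => //; rewrite genmxE.
Qed.

Lemma derived_mxMr_derivation (M : 'M[C]_m) :
  lie_derivation b M -> (derived_mx b *m M <= derived_mx b)%MS.
Proof.
move=> derM; rewrite sumsmxMr; apply/sumsmx_subP => i _.
rewrite sumsmxMr; apply/sumsmx_subP => j _.
by rewrite (eqmxMr M (genmxE _)) derM addmx_sub ?lie_br_sub_derived.
Qed.

End LieBracket.

Section AdaptedBasis.
Variable g : nlie.

Lemma nlie_derivation_dlsubmx (M : 'M[C]_(ldim g)) :
  lie_derivation (@lbr g) M -> dlsubmx M = 0.
Proof.
move=> derM; apply: lsubmx_sub_row_mx0.
have := derived_mxMr_derivation (lbr_lie g) derM.
rewrite (eqmxMr M (eqmxP (lbr_der g))) (eqmxP (lbr_der g)).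
by rewrite -{1}(vsubmxK M) mul_row_col mul0mx add0r mul1mx.
Qed.

Lemma nlie_derivation_ulsubmx_nilpotent (M : 'M[C]_(ldim g)) r :
  lie_derivation (@lbr g) M -> M ^+ r = 0 -> ulsubmx M ^+ r = 0.
Proof.
move=> derM Mr0; rewrite -ulsubmxX ?nlie_derivation_dlsubmx // Mr0.
by apply/matrixP => i j; rewrite !mxE.
Qed.

End AdaptedBasis.

Section ProductByGenerators.
Variables g1 g2 : nlie.
Local Notation n1 := (ngen g1).
Local Notation n2 := (ngen g2).
Local Notation V := 'rV[C]_(pdim g1 g2).
Local Notation i1 := (@i1 g1 g2).
Local Notation i2 := (@i2 g1 g2).
Local Notation i3 := (@i3 g1 g2).

Lemma p1_prod_br (x y : V) : p1 (prod_br x y) = lbr (p1 x) (p1 y).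
Proof. by rewrite /p1 /prod_br !row_mxKl. Qed.

Lemma p2_prod_br (x y : V) : p2 (prod_br x y) = lbr (p2 x) (p2 y).
Proof. by rewrite /p2 /prod_br row_mxKl row_mxKr. Qed.

Lemma p3_prod_br (x y : V) : p3 (prod_br x y) =
  mxvec ((lsubmx (p1 x))^T *m lsubmx (p2 y) - (lsubmx (p1 y))^T *m lsubmx (p2 x)).
Proof. by rewrite /p3 /prod_br row_mxKr outer_productE. Qed.

Lemma p1D (x y : V) : p1 (x + y) = p1 x + p1 y. Proof. by rewrite /p1 !linearD. Qed.
Lemma p2D (x y : V) : p2 (x + y) = p2 x + p2 y. Proof. by rewrite /p2 !linearD. Qed.
Lemma p3D (x y : V) : p3 (x + y) = p3 x + p3 y. Proof. by rewrite /p3 !linearD. Qed.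

Lemma p1_i1 v : p1 (i1 v) = v. Proof. by rewrite /p1 /i1 !row_mxKl. Qed.
Lemma p2_i1 v : p2 (i1 v) = 0. Proof. by rewrite /p2 /i1 row_mxKl row_mxKr. Qed.
Lemma p1_i2 v : p1 (i2 v) = 0. Proof. by rewrite /p1 /i2 !row_mxKl. Qed.
Lemma p2_i2 v : p2 (i2 v) = v. Proof. by rewrite /p2 /i2 row_mxKl row_mxKr. Qed.

Lemma i1_lbr u w : i1 (lbr u w) = prod_br (i1 u) (i1 w).
Proof.
rewrite /prod_br !p1_i1 !p2_i1 (lie_br0l (lbr_lie g2)) outer_productE.
by rewrite !(linear0, addr0).
Qed.

Lemma i2_lbr u w : i2 (lbr u w) = prod_br (i2 u) (i2 w).
Proof.
rewrite /prod_br !p1_i2 !p2_i2 (lie_br0l (lbr_lie g1)) outer_productE.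
by rewrite !(linear0, trmx0, mul0mx, addr0).
Qed.

Lemma i3_delta (i : 'I_n1) (j : 'I_n2) :
  i3 (mxvec (delta_mx i j)) = prod_br (i1 (row_mx 'e_i 0)) (i2 (row_mx 'e_j 0)).
Proof.
rewrite /prod_br p1_i1 p2_i1 p1_i2 p2_i2 (lie_br0r (lbr_lie g1)).
rewrite (lie_br0l (lbr_lie g2)) row_mx0 outer_productE linear0 !row_mxKl trmx0 mul0mx subr0.
by rewrite trmx_delta mul_delta_mx.
Qed.

Definition D11mx (D : 'M[C]_(pdim g1 g2)) : 'M[C]_(ldim g1) :=
  lsubmx (lsubmx (usubmx (usubmx D))).
Definition D22mx (D : 'M[C]_(pdim g1 g2)) : 'M[C]_(ldim g2) :=
  rsubmx (lsubmx (dsubmx (usubmx D))).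
Definition D33mx (D : 'M[C]_(pdim g1 g2)) : 'M[C]_(n1 * n2) :=
  rsubmx (dsubmx D).

Variable D : 'M[C]_(pdim g1 g2).

Lemma D11E v : D11 D v = v *m D11mx D.
Proof.
rewrite /D11 /p1 /i1 -{1}(vsubmxK D) mul_row_col mul0mx addr0.
by rewrite -{1}(vsubmxK (usubmx D)) mul_row_col mul0mx addr0 -!mulmx_lsub.
Qed.

Lemma D22E v : D22 D v = v *m D22mx D.
Proof.
rewrite /D22 /p2 /i2 -{1}(vsubmxK D) mul_row_col mul0mx addr0.
by rewrite -{1}(vsubmxK (usubmx D)) mul_row_col mul0mx add0r -mulmx_lsub -mulmx_rsub.
Qed.

Lemma D33E v : D33 D v = v *m D33mx D.
Proof. by rewrite /D33 /p3 /i3 -{1}(vsubmxK D) mul_row_col mul0mx add0r -mulmx_rsub. Qed.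

Hypothesis derD : is_prod_derivation D.

Lemma D11mx_derivation : lie_derivation (@lbr g1) (D11mx D).
Proof.
move=> u w; rewrite -!D11E /D11 i1_lbr derD.
by rewrite p1D !p1_prod_br !p1_i1.
Qed.

Lemma D22mx_derivation : lie_derivation (@lbr g2) (D22mx D).
Proof.
move=> u w; rewrite -!D22E /D22 i2_lbr derD.
by rewrite p2D !p2_prod_br !p2_i2.
Qed.

Local Notation A := (ulsubmx (D11mx D)).
Local Notation B := (ulsubmx (D22mx D)).

Lemma D33mx_delta (i : 'I_n1) (j : 'I_n2) :
  mxvec (delta_mx i j) *m D33mx D = mxvec (A^T *m delta_mx i j + delta_mx i j *m B).
Proof.
rewrite -D33E /D33 i3_delta derD p3D !p3_prod_br !p1_i1 !p2_i1 !p1_i2 !p2_i2.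
rewrite !linear0 !row_mxKl mul0mx subr0 addr0 -/(D11 D _) -/(D22 D _).
rewrite D11E D22E !lsubmx_row_mx0_mulmx -linearD /= trmx_mul -mulmxA.
by rewrite !trmx_delta !mul_delta_mx mulmxA mul_delta_mx.
Qed.

Lemma D33mx_kronecker_sum : D33mx D = lin_mulmx A^T + lin_mulmxr B.
Proof.
apply/row_matrixP => t; rewrite !rowE; case/mxvec_indexP: t => i j.
by rewrite -mxvec_delta D33mx_delta mulmxDr !mul_vec_lin /= linearD.
Qed.

End ProductByGenerators.

Theorem mainTheorem10 (g1 g2 : nlie) (D : 'M[C]_(pdim g1 g2)) :
  S_algebra g1 -> S_algebra g2 ->
  is_prod_derivation D ->
  nilpotent_endo (D11 D) -> nilpotent_endo (D22 D) ->
  nilpotent_endo (D33 D).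
Proof.
move=> _ _ derD /(nilpotent_endo_mxP (D11E D)) [r D11r0].
move=> /(nilpotent_endo_mxP (D22E D)) [s D22s0].
apply/(nilpotent_endo_mxP (D33E D)); exists (r + s)%N.
rewrite D33mx_kronecker_sum //; apply: kronecker_sum_nilpotent.
  by rewrite -trmxX (nlie_derivation_ulsubmx_nilpotent (D11mx_derivation derD) D11r0) trmx0.
exact: nlie_derivation_ulsubmx_nilpotent (D22mx_derivation derD) D22s0.
Qed.
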